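(* Let $n$, $U=U_{n+1}$, $E_{\mathcal M}$, $F^{\mathcal M}$, $E_{\mathcal M_1\cdots\mathcal M_k}$, $F^{\mathcal N_1\cdots\mathcal N_k}$ and $\mathbb{P}_k$ be as in the context. Let $p\ge2$ and suppose there are real numbers $a_k$ ($k=2,\dots,p$) with $\langle E_{\mathcal M_1\cdots\mathcal M_k}|F^{\mathcal N_1\cdots\mathcal N_k}\rangle=a_k(\mathbb{P}_k)_{\mathcal M_1\cdots\mathcal M_k}{}^{\mathcal N_1\cdots\mathcal N_k}$ for $k=2,\dots,p$; put $a_1=1$ and $\mathbb{P}_1=\delta$. For $k=1,\dots,p$ define $${\tt Y}^{\mathcal N_1\cdots\mathcal N_k}{}_{\mathcal M_1\cdots\mathcal M_{k+1}}=\frac1{a_k}[F^{\mathcal N_1\cdots\mathcal N_k},E_{\mathcal M_1\cdots\mathcal M_{k+1}}],\qquad {\tt X}_{\mathcal M|\mathcal N_1\cdots\mathcal N_k}{}^{\mathcal P_1\cdots\mathcal P_k}=\frac1{a_k}[E_{\mathcal M},[\![E_{\mathcal N_1\cdots\mathcal N_k},F^{\mathcal P_1\cdots\mathcal P_k}]\!]]$$ (with $E_{\mathcal N_1}$, $F^{\mathcal P_1}$ meaning the basis elements when $k=1$). Then, summing over repeated indices, $${\tt X}_{\mathcal M|\mathcal N_1\cdots\mathcal N_p}{}^{\mathcal P_1\cdots\mathcal P_p}=(\mathbb{P}_p)_{\mathcal K_1\cdots\mathcal K_p}{}^{\mathcal P_1\cdots\mathcal P_p}\sum_{i=1}^p\delta_{\mathcal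 N_1}{}^{\mathcal K_1}\cdots\delta_{\mathcal N_{i-1}}{}^{\mathcal K_{i-1}}{\tt X}_{\mathcal M|\mathcal N_i}{}^{\mathcal K_i}\delta_{\mathcal N_{i+1}}{}^{\mathcal K_{i+1}}\cdots\delta_{\mathcal N_p}{}^{\mathcal K_p},$$ $${\tt Y}^{\mathcal N_1\cdots\mathcal N_p}{}_{\mathcal M_1\cdots\mathcal M_{p+1}}=-(\mathbb{P}_p)_{\mathcal K_1\cdots\mathcal K_p}{}^{\mathcal N_1\cdots\mathcal N_p}\delta_{\mathcal M_1}{}^{\mathcal K_1}{\tt Y}^{\mathcal K_2\cdots\mathcal K_p}{}_{\mathcal M_2\cdots\mathcal M_{p+1}}-{\tt X}_{\mathcal M_1|\mathcal M_2\cdots\mathcal M_{p+1}}{}^{\mathcal N_1\cdots\mathcal N_p},$$ $${\tt Y}^{\mathcal M}{}_{\mathcal N\mathcal P}=-{\tt X}_{\mathcal N|\mathcal P}{}^{\mathcal M}-{\tt X}_{\mathcal P|\mathcal N}{}^{\mathcal M}.$$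
   Context: Fix an integer $n$ with $4\le n\le 8$. $E_n$ denotes the split real Lie algebra with Dynkin diagram on nodes $1,\dots,n$, where nodes $1,\dots,n-1$ form a chain and node $n$ is joined to node $n-3$. Extend this diagram by a node $0$ joined to node $1$, and let $A=(A_{IJ})_{I,J=0,\dots,n}$ with $A_{00}=0$, $A_{ii}=2$ for $i\ge1$, $A_{IJ}=-1$ if $I\neq J$ are joined and $0$ otherwise. Let $\tilde U$ be the real Lie superalgebra generated by $e_I,f_I,h_I$ ($I=0,\dots,n$), all even except $e_0,f_0$ which are odd, subject to $[\![h_I,e_J]\!]=A_{IJ}e_J$, $[\![h_I,f_J]\!]=-A_{IJ}f_J$, $[\![e_I,f_J]\!]=\delta_{IJ}h_J$, $[\![h_I,h_J]\!]=0$, where $[\![x,y]\!]$ is the superbracket (written $\{x,y\}$ when both are odd, where it is symmetric, and $[x,y]$ otherwise). $U=U_{n+1}$ is the quotient of $\tilde U$ by its maximal ideal intersecting $\mathrm{span}\{h_I\}$ trivially (equivalently by the ideal generated by $(\mathrm{ad}\,e_i)^{1-A_{iJ}}(e_J)$, $(\mathrm{ad}\,f_i)^{1-A_{iJ}}(f_J)$, $i=1,\dots,n$, $J=0,\dots,n$). $U=\bigoplus_p U_p$ is $\mathbb{Z}$-graded with $e_0\in U_{-1}$, $f_0\in U_1$, all other generators in $U_0$; $U_p$ has parity $p\bmod 2$ and $[\![U_p,U_q]\!]\subseteq U_{p+q}$. Each $U_p$ is a module over the subalgebra $E_n$ generated by $e_i,f_i,h_i$ ($i\ge1$). $U$ carries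 an invariant, supersymmetric bilinear form $\langle\cdot|\cdot\rangle$ with $\langle U_p|U_q\rangle=0$ unless $p+q=0$, $\langle h_I|h_J\rangle=A_{IJ}$, $\langle e_I|f_J\rangle=\delta_{IJ}$, $\langle e_I|e_J\rangle=\langle f_I|f_J\rangle=0$. Choose bases $\{E_{\mathcal M}\}$ of $U_{-1}$ and $\{F^{\mathcal M}\}$ of $U_1$ with $\langle E_{\mathcal M}|F^{\mathcal N}\rangle=\delta_{\mathcal M}{}^{\mathcal N}$. For $k\ge2$ set $E_{\mathcal M_1\cdots\mathcal M_k}=[\![E_{\mathcal M_1},[\![E_{\mathcal M_2},\ldots,[\![E_{\mathcal M_{k-1}},E_{\mathcal M_k}]\!]\cdots]\!]]\!]$ and $F^{\mathcal M_1\cdots\mathcal M_k}$ analogously with $F$'s; these span $U_{-k}$ and $U_k$. For $k\ge2$, $\mathbb{P}_k$ is the projector onto the $E_n$-representation $U_{-k}$ inside the $k$-fold tensor power of $U_{-1}$: an array $(\mathbb{P}_k)_{\mathcal M_1\cdots\mathcal M_k}{}^{\mathcal N_1\cdots\mathcal N_k}$, idempotent as a matrix, with $E_{\mathcal M_1\cdots\mathcal M_k}=(\mathbb{P}_k)_{\mathcal M_1\cdots\mathcal M_k}{}^{\mathcal N_1\cdots\mathcal N_k}E_{\mathcal N_1\cdots\mathcal N_k}$ and $F^{\mathcal N_1\cdots\mathcal N_k}=(\mathbb{P}_k)_{\mathcal M_1\cdots\mathcal M_k}{}^{\mathcal N_1\cdots\mathcal N_k}F^{\mathcal M_1\cdots\mathcal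 M_k}$. *)

From HB Require Import structures.
From mathcomp Require Import all_boot all_order all_algebra.
From mathcomp Require Import reals.
Set Implicit Arguments. Unset Strict Implicit. Unset Printing Implicit Defensive.
Import Order.TTheory GRing.Theory Num.Theory.
Local Open Scope ring_scope.

(* edge a b (a,b as nats): the chain 0-1-...-(n-1) (node 0 attached to node 1,
   nodes 1..n-1 a chain) plus node n joined to node n-3. *)
Definition dyn_edge (n a b : nat) : bool :=
  (((b == a.+1) && (b <= n.-1)) || ((a == n - 3) && (b == n)))%N.
Definition joined (n : nat) (I J : 'I_n.+1) : bool :=
  dyn_edge n I J || dyn_edge n J I.
Definition cartanA (R : nzRingType) (n : nat) (I J : 'I_n.+1) : R :=
  if I == J then (if val I == 0%N then 0 else 2)
  else if joined I J then -1 else 0.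

Section SuperAlg.
Variables (R : realType) (V : lmodType R).

Definition subspace (S : V -> Prop) : Prop :=
  S 0 /\ (forall x y, S x -> S y -> S (x + y)) /\ (forall (c : R) x, S x -> S (c *: x)).

Definition homog (ev od : V -> Prop) (b : bool) (x : V) : Prop :=
  if b then od x else ev x.

Definition bilinear_br (br : V -> V -> V) : Prop :=
  (forall x (c : R) y z, br x (c *: y + z) = c *: br x y + br x z) /\
  (forall z (c : R) x y, br (c *: x + y) z = c *: br x z + br y z).

Definition is_lie_superalgebra (ev od : V -> Prop) (br : V -> V -> V) : Prop :=
  [/\ subspace ev, subspace od,
      (forall x, exists y z, [/\ ev y, od z & x = y + z]),
      (forall x, ev x -> od x -> x = 0) &
      [/\ bilinear_br br,
          (forall s t x y, homog ev od s x -> homog ev od t y ->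
              homog ev od (addb s t) (br x y)),
          (forall s t x y, homog ev od s x -> homog ev od t y ->
              br x y = - ((-1) ^+ (s && t) *: br y x)) &
          (forall s t x y z, homog ev od s x -> homog ev od t y ->
              br x (br y z) = br (br x y) z + (-1) ^+ (s && t) *: br y (br x z))]].

Inductive gen_by (br : V -> V -> V) (G : V -> Prop) : V -> Prop :=
| gen_base x : G x -> gen_by br G x
| gen_zero : gen_by br G 0
| gen_add x y : gen_by br G x -> gen_by br G y -> gen_by br G (x + y)
| gen_scale (c : R) x : gen_by br G x -> gen_by br G (c *: x)
| gen_br x y : gen_by br G x -> gen_by br G y -> gen_by br G (br x y).

Definition is_ideal (br : V -> V -> V) (J : V -> Prop) : Prop :=
  subspace J /\ (forall x y, J y -> J (br x y) /\ J (br y x)).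

Variable n : nat.

Inductive Ugr (br : V -> V -> V) (e f h : 'I_n.+1 -> V) : int -> V -> Prop :=
| gr_e0 : Ugr br e f h (-1) (e ord0)
| gr_f0 : Ugr br e f h 1 (f ord0)
| gr_e i : i != ord0 -> Ugr br e f h 0 (e i)
| gr_f i : i != ord0 -> Ugr br e f h 0 (f i)
| gr_h i : Ugr br e f h 0 (h i)
| gr_zero p : Ugr br e f h p 0
| gr_add p x y : Ugr br e f h p x -> Ugr br e f h p y -> Ugr br e f h p (x + y)
| gr_scale p (c : R) x : Ugr br e f h p x -> Ugr br e f h p (c *: x)
| gr_br p q x y : Ugr br e f h p x -> Ugr br e f h q y -> Ugr br e f h (p + q) (br x y).

(* (V, ev, od, br) together with e_I, f_I, h_I is the Lie superalgebra
   U = U_{n+1}: generated by e,f,h subject to the defining relations, and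
   the quotient of the free one by the maximal ideal meeting span{h_I}
   trivially (equivalently: h_I independent and every nonzero ideal meets
   span{h_I}). *)
Definition is_U (ev od : V -> Prop) (br : V -> V -> V) (e f h : 'I_n.+1 -> V) : Prop :=
  [/\ is_lie_superalgebra ev od br,
      [/\ od (e ord0), od (f ord0),
          (forall i, i != ord0 -> ev (e i) /\ ev (f i)) &
          (forall I, ev (h I))],
      [/\ (forall I J, br (h I) (e J) = cartanA R I J *: e J),
          (forall I J, br (h I) (f J) = - (cartanA R I J *: f J)),
          (forall I J, br (e I) (f J) = (I == J)%:R *: h J) &
          (forall I J, br (h I) (h J) = 0)],
      (forall x, gen_by br (fun y => exists I, [\/ y = e I, y = f I | y = h I]) x) &
      [/\ (forall c : 'I_n.+1 -> R, \sum_I c I *: h I = 0 -> forall I, c I = 0) &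
          (forall J, is_ideal br J ->
             (forall x, J x -> (exists c : 'I_n.+1 -> R, x = \sum_I c I *: h I) -> x = 0) ->
             forall x, J x -> x = 0)]].

Definition is_U_form (ev od : V -> Prop) (br : V -> V -> V) (e f h : 'I_n.+1 -> V)
    (form : V -> V -> R) : Prop :=
  [/\ (forall x (c : R) y z, form x (c *: y + z) = c * form x y + form x z) /\
      (forall z (c : R) x y, form (c *: x + y) z = c * form x z + form y z),
      (forall x y z, form (br x y) z = form x (br y z)),
      (forall s t x y, homog ev od s x -> homog ev od t y ->
          form x y = (-1) ^+ (s && t) * form y x),
      (forall p q x y, Ugr br e f h p x -> Ugr br e f h q y -> p + q != 0 -> form x y = 0) &
      [/\ (forall I J, form (h I) (h J) = cartanA R I J),
          (forall I J, form (e I) (f J) = (I == J)%:R),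
          (forall I J, form (e I) (e J) = 0) &
          (forall I J, form (f I) (f J) = 0)]].

Definition is_basis_of (M : finType) (S : V -> Prop) (B : M -> V) : Prop :=
  [/\ (forall m, S (B m)),
      (forall c : M -> R, \sum_m c m *: B m = 0 -> forall m, c m = 0) &
      (forall x, S x -> exists c : M -> R, x = \sum_m c m *: B m)].

Variable M : finType.

Fixpoint nest (br : V -> V -> V) (G : M -> V) (s : seq M) : V :=
  match s with
  | [::] => 0
  | [:: m] => G m
  | m :: s' => br (G m) (nest br G s')
  end.

Definition Yop (br : V -> V -> V) (E F : M -> V) (a : nat -> R) (N Ms : seq M) : V :=
  (a (size N))^-1 *: br (nest br F N) (nest br E Ms).

Definition Xop (br : V -> V -> V) (E F : M -> V) (a : nat -> R) (m : M) (N Q : seq M) : V :=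
  (a (size N))^-1 *: br (E m) (br (nest br E N) (nest br F Q)).

End SuperAlg.

(* Both sides of the first two identities lie in U_{-1}, where E and F are
   dual bases, so it suffices to pair them with every F^t.  Invariance of the
   form moves F^t into the brackets, where D = [F^t, E_m] is even of degree 0
   and therefore acts on a nested bracket E_{N_1...N_k} as a derivation, one
   slot at a time.  Re-expanding each slot in the dual basis and using
   <E_{N_1...N_k} | F^{P_1...P_k}> = a_k P_k gives the X identity.  The Y
   identities come from the super Jacobi identity for
   [F^N, [E_{M_1}, E_{M_2...M_{p+1}}]]; its remaining term is identified by the
   same pairing argument, since [E_{M_2...M_{p+1}}, F^t] is a combination of
   nested brackets of length p - 1, each of which satisfies
   E_S = a_{p-1}^{-1} <E_S | F^K> E_K. *)
From HB Require Import structures.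
From mathcomp Require Import all_boot all_order all_algebra zify ring.
From mathcomp Require Import reals.
Import Order.TTheory GRing.Theory Num.Theory.
Local Open Scope ring_scope.
Set Implicit Arguments. Unset Strict Implicit. Unset Printing Implicit Defensive.

Lemma odd_abszD (p q : int) : odd `|p + q| = odd `|p| (+) odd `|q|.
Proof.
have := modn2 `|p + q|; have := modn2 `|p|; have := modn2 `|q|.
by case: (odd `|p + q|); case: (odd `|p|); case: (odd `|q|) => /=; lia.
Qed.

Section TupleSums.
Variables (R : comNzRingType) (T : finType).

Lemma big_cons_tuple (W : zmodType) k (G : k.+1.-tuple T -> W) :
  \sum_K G K = \sum_x \sum_(K : k.-tuple T) G (cons_tuple x K).
Proof.
rewrite pair_big /= (reindex (fun p : T * k.-tuple T => cons_tuple p.1 p.2)) //.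
exists (fun K => (thead K, behead_tuple K)).
  by move=> [x K] _ /=; congr (_, _); apply: val_inj.
by move=> K _; rewrite [RHS]tuple_eta; apply: val_inj.
Qed.

Lemma big_tuple0 (W : zmodType) (G : 0.-tuple T -> W) : \sum_K G K = G [tuple].
Proof.
rewrite (eq_bigr (fun _ => G [tuple])) => [|K _]; last by rewrite tuple0.
by rewrite sumr_const card_tuple expn0.
Qed.

Lemma tuple_neq_nil p (S : p.-tuple T) : (0 < p)%N -> (S : seq T) != [::].
Proof. by rewrite -size_eq0 size_tuple -lt0n. Qed.

Definition set_tnth p (N : p.-tuple T) (i : 'I_p) (k : T) : p.-tuple T :=
  [tuple if j == i then k else tnth N j | j < p].

Lemma set_tnthE p x0 (N : p.-tuple T) i k : val (set_tnth N i k) = set_nth x0 N i k.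
Proof.
apply: (@eq_from_nth _ x0).
  by rewrite size_set_nth !size_tuple; apply/esym/maxn_idPr; rewrite ltn_ord.
move=> j; rewrite size_tuple => lt_j_p.
rewrite nth_set_nth /= -(tnth_nth x0 (set_tnth N i k) (Ordinal lt_j_p)) tnth_mktuple.
have -> : (Ordinal lt_j_p == i) = (j == i) by [].
by case: eqP => // _; rewrite (tnth_nth x0).
Qed.

Lemma tnth_set_tnth p (N : p.-tuple T) i k : tnth (set_tnth N i k) i = k.
Proof. by rewrite tnth_mktuple eqxx. Qed.

Lemma sum_tuple_delta_off p (N : p.-tuple T) (i : 'I_p) (Phi : p.-tuple T -> R)
    (g : T -> R) :
  \sum_K Phi K * \prod_(j < p | j != i) (tnth N j == tnth K j)%:R * g (tnth K i) =
  \sum_k Phi (set_tnth N i k) * g k.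
Proof.
rewrite (partition_big (fun K => tnth K i) xpredT) //; apply: eq_bigr => k _.
rewrite (bigD1 (set_tnth N i k)) /= ?tnth_set_tnth //.
rewrite big1 => [|j ne_ji]; last by rewrite tnth_mktuple (negPf ne_ji) eqxx.
rewrite mulr1 big1 ?addr0 // => K /andP [/eqP Ki_k neK].
have /existsP [j neKj] : [exists j, tnth K j != tnth (set_tnth N i k) j].
  apply: contraR neK => /existsPn eqK; apply/eqP/eq_from_tnth => j.
  exact/eqP/negbNE/eqK.
have ne_ji : j != i by apply: contraNneq neKj => ->; rewrite tnth_set_tnth Ki_k.
rewrite (bigD1 j) //=; move: neKj; rewrite tnth_mktuple (negPf ne_ji) eq_sym.
by move/negPf->; rewrite mul0r mulr0 mul0r.
Qed.

End TupleSums.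

Section LinearMap.
Variables (R : nzRingType) (U W : lmodType R) (g : U -> W).
Hypothesis g_lin : forall c x y, g (c *: x + y) = c *: g x + g y.

Lemma lin_map0 : g 0 = 0.
Proof.
apply: (@addrI _ (g 0)); have := g_lin 1 0 0.
by rewrite scaler0 addr0 scale1r addr0 => <-.
Qed.

Lemma lin_mapD x y : g (x + y) = g x + g y.
Proof. by rewrite -[x in LHS]scale1r g_lin scale1r. Qed.

Lemma lin_mapZ c x : g (c *: x) = c *: g x.
Proof. by rewrite -[_ *: x]addr0 g_lin lin_map0 addr0. Qed.

Lemma lin_map_sum I (r : seq I) (P : pred I) (G : I -> U) :
  g (\sum_(i <- r | P i) G i) = \sum_(i <- r | P i) g (G i).
Proof. exact: (big_morph g lin_mapD lin_map0). Qed.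

End LinearMap.

Section Superalgebra.
Variables (R : realType) (V : lmodType R) (ev od : V -> Prop) (br : V -> V -> V).
Hypothesis Hlie : is_lie_superalgebra ev od br.

Local Notation hom := (homog ev od).

Lemma br_homog s t x y : hom s x -> hom t y -> hom (addb s t) (br x y).
Proof. by case: Hlie => _ _ _ _ [] _ H _ _; apply: H. Qed.

Lemma br_antisym s t x y : hom s x -> hom t y -> br x y = - ((-1) ^+ (s && t) *: br y x).
Proof. by case: Hlie => _ _ _ _ [] _ _ H _; apply: H. Qed.

Lemma br_jacobi s t x y z : hom s x -> hom t y ->
  br x (br y z) = br (br x y) z + (-1) ^+ (s && t) *: br y (br x z).
Proof. by case: Hlie => _ _ _ _ [] _ _ _ H; apply: H. Qed.

Let br_linr x : forall c y z, br x (c *: y + z) = c *: br x y + br x z.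
Proof. by case: Hlie => _ _ _ _ [[H _] _ _ _]; apply: H. Qed.

Let br_linl z : forall c x y, br (c *: x + y) z = c *: br x z + br y z.
Proof. by case: Hlie => _ _ _ _ [[_ H] _ _ _]; apply: H. Qed.

Lemma br0r x : br x 0 = 0.
Proof. exact: lin_map0 (br_linr x). Qed.

Lemma brDr x y z : br x (y + z) = br x y + br x z.
Proof. exact: (lin_mapD (br_linr x) y z). Qed.

Lemma brZr x c y : br x (c *: y) = c *: br x y.
Proof. exact: (lin_mapZ (br_linr x) c y). Qed.

Lemma brNr x y : br x (- y) = - br x y.
Proof. by rewrite -scaleN1r brZr scaleN1r. Qed.

Lemma brZl x c y : br (c *: x) y = c *: br x y.
Proof. exact: (lin_mapZ (br_linl y) c x). Qed.

Lemma br_sumr x I (r : seq I) (P : pred I) (G : I -> V) :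
  br x (\sum_(i <- r | P i) G i) = \sum_(i <- r | P i) br x (G i).
Proof. exact: (lin_map_sum (br_linr x)). Qed.

Lemma br_suml x I (r : seq I) (P : pred I) (G : I -> V) :
  br (\sum_(i <- r | P i) G i) x = \sum_(i <- r | P i) br (G i) x.
Proof. exact: (lin_map_sum (br_linl x)). Qed.

Lemma homog0 b : hom b 0.
Proof. by case: Hlie => [[? _] [? _] _ _ _]; case: b. Qed.

Lemma homogD b x y : hom b x -> hom b y -> hom b (x + y).
Proof. by case: Hlie => [[_ [? _]] [_ [? _]] _ _ _]; case: b => /=; auto. Qed.

Lemma homogZ b c x : hom b x -> hom b (c *: x).
Proof. by case: Hlie => [[_ [_ ?]] [_ [_ ?]] _ _ _]; case: b => /=; auto. Qed.

Variables (n : nat) (e f h : 'I_n.+1 -> V).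
Hypotheses (He0 : od (e ord0)) (Hf0 : od (f ord0))
  (Hef : forall i, i != ord0 -> ev (e i) /\ ev (f i)) (Hh : forall I, ev (h I)).

Local Notation U := (Ugr br e f h).

Lemma Ugr_homog d x : U d x -> hom (odd `|d|) x.
Proof.
elim=> //= [i /Hef [] | i /Hef [] | * | * | * | p q x1 y1 _ Hx _ Hy] //.
- exact: homog0.
- exact: homogD.
- exact: homogZ.
- by rewrite odd_abszD; apply: br_homog.
Qed.

Lemma Ugr_cast d d' x : d = d' -> U d x -> U d' x.
Proof. by move=> ->. Qed.

Lemma Ugr_sum d I (r : seq I) (P : pred I) (G : I -> V) :
  (forall i, P i -> U d (G i)) -> U d (\sum_(i <- r | P i) G i).
Proof.
move=> UG; apply: (big_ind (U d)) => //; first exact: gr_zero.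
by move=> ? ?; apply: gr_add.
Qed.

Variable form : V -> V -> R.
Hypotheses (Hfl : forall x (c : R) y z, form x (c *: y + z) = c * form x y + form x z)
  (Hfr : forall z (c : R) x y, form (c *: x + y) z = c * form x z + form y z)
  (Hinv : forall x y z, form (br x y) z = form x (br y z))
  (Hsym : forall s t x y, hom s x -> hom t y -> form x y = (-1) ^+ (s && t) * form y x).

Lemma formDr x y z : form x (y + z) = form x y + form x z.
Proof. exact: (lin_mapD (g := form x : V -> R^o) (Hfl x) y z). Qed.

Lemma formZr x c y : form x (c *: y) = c * form x y.
Proof. exact: (lin_mapZ (g := form x : V -> R^o) (Hfl x) c y). Qed.

Lemma formZl x c y : form (c *: x) y = c * form x y.
Proof. exact: (lin_mapZ (g := form^~ y : V -> R^o) (Hfr y) c x). Qed.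

Lemma formNl x y : form (- x) y = - form x y.
Proof. by rewrite -scaleN1r formZl mulN1r. Qed.

Lemma form_suml x I (r : seq I) (P : pred I) (G : I -> V) :
  form (\sum_(i <- r | P i) G i) x = \sum_(i <- r | P i) form (G i) x.
Proof. exact: (lin_map_sum (g := form^~ x : V -> R^o) (Hfr x)). Qed.

Variables (M : finType) (E F : M -> V).
Hypotheses (HE : is_basis_of (U (-1)) E) (HF : forall m, U 1 (F m))
  (HEF : forall m m', form (E m) (F m') = (m == m')%:R).

Lemma Ugr_E m : U (-1) (E m). Proof. by case: HE. Qed.

Lemma Um1_dual_expansion v : U (-1) v -> v = \sum_k form v (F k) *: E k.
Proof.
case: HE => _ _ span_E /span_E [c ->]; apply: eq_bigr => k _; congr (_ *: _).
rewrite form_suml (bigD1 k) //= formZl HEF eqxx mulr1 big1 ?addr0 // => j ne_jk.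
by rewrite formZl HEF (negPf ne_jk) mulr0.
Qed.

Lemma Um1_eq_by_pairing v w : U (-1) v -> U (-1) w ->
  (forall t, form v (F t) = form w (F t)) -> v = w.
Proof.
move=> Uv Uw eq_vw; rewrite (Um1_dual_expansion Uv) (Um1_dual_expansion Uw).
by apply: eq_bigr => k _; rewrite eq_vw.
Qed.

Lemma nest_cons (G : M -> V) m s : s != [::] -> nest br G (m :: s) = br (G m) (nest br G s).
Proof. by case: s. Qed.

Lemma Ugr_nestE s : U (- (size s)%:Z) (nest br E s).
Proof.
elim: s => [|m [|m' s] IH]; [exact: gr_zero | exact: Ugr_E |].
by rewrite nest_cons //; apply: Ugr_cast (gr_br (Ugr_E m) IH) => /=; lia.
Qed.

Lemma Ugr_nestF s : U (size s)%:Z (nest br F s).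
Proof.
elim: s => [|m [|m' s] IH]; [exact: gr_zero | exact: HF |].
by rewrite nest_cons //; apply: Ugr_cast (gr_br (HF m) IH) => /=; lia.
Qed.

Lemma homog_nestE s : hom (odd (size s)) (nest br E s).
Proof. by have := Ugr_homog (Ugr_nestE s); rewrite abszN absz_nat. Qed.

Lemma homog_nestF s : hom (odd (size s)) (nest br F s).
Proof. by have := Ugr_homog (Ugr_nestF s); rewrite absz_nat. Qed.

Lemma homog_E m : hom true (E m). Proof. exact: Ugr_homog (Ugr_E m). Qed.
Lemma homog_F m : hom true (F m). Proof. exact: Ugr_homog (HF m). Qed.

Lemma br_nestE_derivation D (c : M -> M -> R) (m0 : M) s : hom false D ->
  (forall k, br D (E k) = \sum_j c k j *: E j) -> s != [::] ->
  br D (nest br E s) =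
  \sum_(0 <= i < size s) \sum_k c (nth m0 s i) k *: nest br E (set_nth m0 s i k).
Proof.
move=> evenD DE; elim: s => [|x [|y s] IH] // _; first by rewrite big_nat1 /= DE.
rewrite nest_cons // (br_jacobi (t := true) _ evenD (homog_E x)) expr0 scale1r.
rewrite DE br_suml IH // br_sumr [in RHS]big_nat_recl //; congr (_ + _).
  by apply: eq_bigr => k _; rewrite brZl.
apply: eq_bigr => i _; rewrite br_sumr; apply: eq_bigr => k _.
by rewrite brZr -nest_cons //; case: i.
Qed.

Inductive span_nestE (k : nat) : V -> Prop :=
| span_nest s : size s = k -> span_nestE k (nest br E s)
| span0 : span_nestE k 0
| spanD x y : span_nestE k x -> span_nestE k y -> span_nestE k (x + y)
| spanZ (c : R) x : span_nestE k x -> span_nestE k (c *: x).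

Lemma span_nestE_sum k I (r : seq I) (P : pred I) (G : I -> V) :
  (forall i, P i -> span_nestE k (G i)) -> span_nestE k (\sum_(i <- r | P i) G i).
Proof.
move=> spanG; apply: (big_ind (span_nestE k)) => //; first exact: span0.
by move=> ? ?; apply: spanD.
Qed.

Lemma span_nestE_Um1 v : U (-1) v -> span_nestE 1 v.
Proof.
move=> /Um1_dual_expansion ->; apply: span_nestE_sum => k _; apply: spanZ.
exact: (span_nest (s := [:: k])).
Qed.

Lemma span_nestE_brE k m v : (0 < k)%N -> span_nestE k v -> span_nestE k.+1 (br (E m) v).
Proof.
move=> k_gt0; elim=> [s size_s | | x y _ Hx _ Hy | c x _ Hx].
- have s_nil : s != [::] by case: s size_s k_gt0 => // <-.
  by rewrite -(nest_cons E m s_nil); apply: span_nest; rewrite /= size_s.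
- by rewrite br0r; apply: span0.
- by rewrite brDr; apply: spanD.
- by rewrite brZr; apply: spanZ.
Qed.

Lemma span_nestE_U0 D s : hom false D -> U 0 D -> s != [::] ->
  span_nestE (size s) (br D (nest br E s)).
Proof.
case: s => [//|m0 s] evenD UD s_nil.
have DE k : br D (E k) = \sum_j form (br D (E k)) (F j) *: E j.
  by apply: Um1_dual_expansion; apply: Ugr_cast (gr_br UD (Ugr_E k)).
rewrite (br_nestE_derivation m0 evenD DE s_nil) big_mkord.
apply: span_nestE_sum => i _; apply: span_nestE_sum => k _; apply: spanZ.
by apply: span_nest; rewrite size_set_nth; apply/maxn_idPr; rewrite ltn_ord.
Qed.

Lemma span_nestE_brF t s : (2 <= size s)%N -> span_nestE (size s).-1 (br (F t) (nest br E s)).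
Proof.
elim: s => [|x [|y s] IH] // _.
rewrite nest_cons // (br_jacobi _ (homog_F t) (homog_E x)) expr1 scaleN1r.
have UFE z : U 0 (br (F t) (E z)) by apply: Ugr_cast (gr_br (HF t) (Ugr_E z)).
apply: spanD; first exact: (span_nestE_U0 (s := y :: s) (br_homog (homog_F t) (homog_E x))).
rewrite -scaleN1r; apply: spanZ; case: s IH => [|z s] IH.
  by apply: span_nestE_Um1; apply: Ugr_cast (gr_br (Ugr_E x) (UFE y)).
exact: span_nestE_brE (IH isT).
Qed.

Lemma eq_on_span_nestE k (phi psi : V -> R)
    (phi_lin : forall c x y, phi (c *: x + y) = c * phi x + phi y)
    (psi_lin : forall c x y, psi (c *: x + y) = c * psi x + psi y) :
  (forall s, size s = k -> phi (nest br E s) = psi (nest br E s)) ->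
  forall v, span_nestE k v -> phi v = psi v.
Proof.
move=> eq_nest v; elim=> [s /eq_nest // | | x y _ Hx _ Hy | c x _ Hx].
- exact: (etrans (lin_map0 (g := phi : V -> R^o) phi_lin)
                 (esym (lin_map0 (g := psi : V -> R^o) psi_lin))).
- rewrite (lin_mapD (g := phi : V -> R^o) phi_lin).
  by rewrite (lin_mapD (g := psi : V -> R^o) psi_lin) Hx Hy.
- rewrite (lin_mapZ (g := phi : V -> R^o) phi_lin).
  by rewrite (lin_mapZ (g := psi : V -> R^o) psi_lin) Hx.
Qed.

Variable a : nat -> R.
Hypothesis Ha1 : a 1%N = 1.

Lemma Ugr_brE_nest m s q : size s = size q ->
  U (-1) (br (E m) (br (nest br E s) (nest br F q))).
Proof.
move=> size_sq.
by apply: Ugr_cast (gr_br (Ugr_E m) (gr_br (Ugr_nestE s) (Ugr_nestF q))); rewrite size_sq; lia.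
Qed.

Lemma Ugr_Xop m s q : size s = size q -> U (-1) (Xop br E F a m s q).
Proof. by move/(Ugr_brE_nest m); apply: gr_scale. Qed.

Lemma Xop_pairing m t s q : size s = size q ->
  form (Xop br E F a m s q) (F t) =
  - ((a (size s))^-1 * form (br (br (F t) (E m)) (nest br E s)) (nest br F q)).
Proof.
move=> size_sq; have UX := Ugr_brE_nest m size_sq.
rewrite /Xop formZl (Hsym (Ugr_homog UX) (homog_F t)) /= expr1 mulN1r.
by rewrite -!Hinv mulrN.
Qed.

Lemma Xop1_pairing m t x y :
  form (Xop br E F a m [:: x] [:: y]) (F t) = - form (br (br (F t) (E m)) (E x)) (F y).
Proof. by rewrite Xop_pairing //= Ha1 invr1 mul1r. Qed.

Section TupleProjector.
Variables (p : nat) (Pp : p.-tuple M -> p.-tuple M -> R).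
Hypotheses (p_gt0 : (0 < p)%N) (ap_neq0 : a p != 0)
  (pairing_p : forall S T : p.-tuple M, form (nest br E S) (nest br F T) = a p * Pp S T).

Lemma Xop_pairing_slots m t (N Q : p.-tuple M) :
  form (Xop br E F a m N Q) (F t) =
  - \sum_(i < p) \sum_k form (br (br (F t) (E m)) (E (tnth N i))) (F k) * Pp (set_tnth N i k) Q.
Proof.
set D := br (F t) (E m).
have evenD : hom false D := br_homog (homog_F t) (homog_E m).
have DE k : br D (E k) = \sum_j form (br D (E k)) (F j) *: E j.
  by apply: Um1_dual_expansion; apply: Ugr_cast (gr_br (gr_br (HF t) (Ugr_E m)) (Ugr_E k)).
rewrite Xop_pairing ?size_tuple //.
rewrite (br_nestE_derivation m evenD DE (tuple_neq_nil N p_gt0)) size_tuple big_mkord.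
rewrite form_suml mulr_sumr; congr (- _); apply: eq_bigr => i _.
rewrite form_suml mulr_sumr; apply: eq_bigr => k _.
by rewrite formZl -(set_tnthE m N i k) pairing_p (tnth_nth m) mulrCA mulKf // mulrC.
Qed.

Lemma Xop_tuple_expansion m (N Q : p.-tuple M) :
  Xop br E F a m N Q =
  \sum_(K : p.-tuple M) \sum_(i < p)
     (Pp K Q * \prod_(j < p | j != i) (tnth N j == tnth K j)%:R) *:
       Xop br E F a m [:: tnth N i] [:: tnth K i].
Proof.
apply: Um1_eq_by_pairing => [| | t]; first by apply: Ugr_Xop; rewrite !size_tuple.
  by apply: Ugr_sum => K _; apply: Ugr_sum => i _; apply: gr_scale; apply: Ugr_Xop.
rewrite Xop_pairing_slots form_suml; symmetry.
under eq_bigr do rewrite form_suml.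
rewrite exchange_big /= -sumrN; apply: eq_bigr => i _.
under eq_bigr do rewrite formZl Xop1_pairing mulrN.
rewrite sumrN (sum_tuple_delta_off N i (Pp^~ Q)
  (fun k => form (br (br (F t) (E m)) (E (tnth N i))) (F k))).
by congr (- _); apply: eq_bigr => k _; rewrite mulrC.
Qed.

End TupleProjector.

Lemma Yop_two m q r :
  Yop br E F a [:: m] [:: q; r] =
  - Xop br E F a q [:: r] [:: m] - Xop br E F a r [:: q] [:: m].
Proof.
rewrite /Yop /Xop /= Ha1 invr1 !scale1r.
rewrite (br_jacobi _ (homog_F m) (homog_E q)) expr1 scaleN1r.
rewrite (br_antisym (homog_F m) (homog_E q)) expr1 scaleN1r opprK.
rewrite (br_antisym (homog_F m) (homog_E r)) expr1 scaleN1r opprK.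
rewrite (br_antisym (br_homog (homog_E q) (homog_F m)) (homog_E r)) expr0 scale1r.
by rewrite addrC.
Qed.

Lemma Yop_cons_jacobi N m1 Ms : size N = size Ms -> Ms != [::] ->
  Yop br E F a N (m1 :: Ms) =
  (a (size N))^-1 *: br (br (nest br F N) (E m1)) (nest br E Ms) - Xop br E F a m1 Ms N.
Proof.
move=> size_NMs Ms_nil.
rewrite /Yop /Xop -size_NMs nest_cons // (br_jacobi _ (homog_nestF N) (homog_E m1)).
rewrite (br_antisym (homog_nestF N) (homog_nestE Ms)) size_NMs andbT andbb.
by rewrite brNr brZr scalerN scalerA -signr_addb addbb expr0 scale1r scalerDr scalerN.
Qed.

Definition nestE_dual_expansion k := forall s : k.-tuple M,
  nest br E s = \sum_(K : k.-tuple M) ((a k)^-1 * form (nest br E s) (nest br F K)) *: nest br E K.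

Lemma nestE_dual_expansion1 : nestE_dual_expansion 1.
Proof.
case=> [[|y [|? ?]] //= _]; rewrite big_cons_tuple.
under eq_bigr do rewrite big_tuple0.
by rewrite Ha1 invr1 {1}(Um1_dual_expansion (Ugr_E y)); apply: eq_bigr => x _; rewrite mul1r.
Qed.

Lemma nestE_dual_expansion_proj k (Pk : k.-tuple M -> k.-tuple M -> R) : a k != 0 ->
  (forall S : k.-tuple M, nest br E S = \sum_(T : k.-tuple M) Pk S T *: nest br E T) ->
  (forall S T : k.-tuple M, form (nest br E S) (nest br F T) = a k * Pk S T) ->
  nestE_dual_expansion k.
Proof.
move=> ak_neq0 PkE pairing_k S; rewrite {1}PkE; apply: eq_bigr => T _.
by rewrite pairing_k mulKf.
Qed.

Section DualExpansion.
Variables (k : nat) (Pk1 : k.+1.-tuple M -> k.+1.-tuple M -> R).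
Hypotheses (k_gt0 : (0 < k)%N) (dual_k : nestE_dual_expansion k) (ak1_neq0 : a k.+1 != 0)
  (pairing_k1 : forall S T : k.+1.-tuple M,
     form (nest br E S) (nest br F T) = a k.+1 * Pk1 S T).

Lemma projector_cons_dual m (S : k.-tuple M) (T : k.+1.-tuple M) :
  Pk1 (cons_tuple m S) T =
  \sum_(K : k.-tuple M) (a k)^-1 * form (nest br E S) (nest br F K) * Pk1 (cons_tuple m K) T.
Proof.
apply: (mulfI ak1_neq0); rewrite -pairing_k1 mulr_sumr.
rewrite [val _]/= nest_cons ?tuple_neq_nil // {1}dual_k br_sumr form_suml.
apply: eq_bigr => K _; rewrite brZr formZl -nest_cons ?tuple_neq_nil //.
by rewrite -[_ :: _]/(val (cons_tuple m K)) pairing_k1 mulrCA.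
Qed.

Lemma Yop_recursion (N : k.+1.-tuple M) (m1 : M) (Ms : k.+1.-tuple M) :
  Yop br E F a N (m1 :: Ms) =
  - (\sum_(K : k.+1.-tuple M) (Pk1 K N * (head m1 K == m1)%:R) *: Yop br E F a (behead K) Ms)
  - Xop br E F a m1 Ms N.
Proof.
have size_N : size N = k.+1 by rewrite size_tuple.
have size_Ms : size Ms = k.+1 by rewrite size_tuple.
rewrite Yop_cons_jacobi ?size_tuple ?tuple_neq_nil //; congr (_ - _).
apply: Um1_eq_by_pairing => [| | t].
- apply: gr_scale; apply: Ugr_cast (gr_br (gr_br (Ugr_nestF N) (Ugr_E m1)) (Ugr_nestE Ms)).
  by rewrite size_N size_Ms; lia.
- rewrite -scaleN1r; apply: gr_scale; apply: Ugr_sum => K _; do 2!apply: gr_scale.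
  apply: Ugr_cast (gr_br (Ugr_nestF (behead K)) (Ugr_nestE Ms)).
  by rewrite size_behead size_tuple size_Ms /=; lia.
(* Both sides are linear in Z = [E_Ms, F^t], a combination of nested brackets
   of length k, so it suffices to compare them on such brackets. *)
set Z := br (nest br E Ms) (F t).
have spanZ : span_nestE k Z.
  rewrite /Z (br_antisym (homog_nestE Ms) (homog_F t)) -scaleN1r scalerA; apply: spanZ.
  by have := span_nestE_brF t (s := Ms); rewrite size_Ms; apply.
rewrite formZl Hinv Hinv -/Z formNl form_suml.
under eq_bigr do rewrite formZl /Yop formZl Hinv -/Z size_behead size_tuple /=.
clearbody Z; move: Z spanZ; apply: eq_on_span_nestE => /=.
- by move=> c x y; rewrite brDr brZr formDr formZr; ring.
- move=> c x y; rewrite mulrN mulr_sumr -opprD -big_split /=; congr (- _).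
  by apply: eq_bigr => K _; rewrite formDr formZr; ring.
move=> s size_s.
have [S ->] : exists S : k.-tuple M, s = S by exists (Tuple (introT eqP size_s)).
rewrite -nest_cons ?tuple_neq_nil //.
rewrite (Hsym (homog_nestF N) (homog_nestE (cons_tuple m1 S))) !size_tuple andbb.
rewrite pairing_k1 projector_cons_dual !mulr_sumr big_cons_tuple (bigD1 m1) //=.
rewrite [X in _ + X]big1 => [|x ne_x]; last first.
  by apply: big1 => K _; rewrite /= (negPf ne_x) mulr0 mul0r.
rewrite addr0 -sumrN; apply: eq_bigr => K _ /=.
rewrite (Hsym (homog_nestF K) (homog_nestE S)) !size_tuple andbb signrN eqxx.
by rewrite mulr1 mulrCA mulKf //; ring.
Qed.

End DualExpansion.

End Superalgebra.

Theorem corollary1 (n : nat) (Hn : (4 <= n <= 8)%N)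
  (R : realType) (V : lmodType R)
  (ev od : V -> Prop) (br : V -> V -> V) (e f h : 'I_n.+1 -> V)
  (HU : is_U ev od br e f h)
  (form : V -> V -> R) (Hform : is_U_form ev od br e f h form)
  (M : finType) (E F : M -> V)
  (HE : is_basis_of (Ugr br e f h (-1)) E)
  (HF : is_basis_of (Ugr br e f h 1) F)
  (HEF : forall m m', form (E m) (F m') = (m == m')%:R)
  (P : forall k : nat, k.-tuple M -> k.-tuple M -> R)
  (HPid : forall k, (2 <= k)%N -> forall S T : k.-tuple M,
      \sum_(W : k.-tuple M) P k S W * P k W T = P k S T)
  (HPE : forall k, (2 <= k)%N -> forall S : k.-tuple M,
      nest br E S = \sum_(T : k.-tuple M) P k S T *: nest br E T)
  (HPF : forall k, (2 <= k)%N -> forall T : k.-tuple M,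
      nest br F T = \sum_(S : k.-tuple M) P k S T *: nest br F S)
  (p : nat) (Hp : (2 <= p)%N) (a : nat -> R) (Ha1 : a 1%N = 1)
  (Ha0 : forall k, (2 <= k <= p)%N -> a k != 0)
  (Hpair : forall k, (2 <= k <= p)%N -> forall S T : k.-tuple M,
      form (nest br E S) (nest br F T) = a k * P k S T) :
  [/\ (forall (m : M) (N Q : p.-tuple M),
        Xop br E F a m N Q =
        \sum_(K : p.-tuple M) \sum_(i < p)
           (P p K Q * \prod_(j < p | j != i) (tnth N j == tnth K j)%:R) *:
             Xop br E F a m [:: tnth N i] [:: tnth K i]),
      (forall (N : p.-tuple M) (m1 : M) (Ms : p.-tuple M),
        Yop br E F a N (m1 :: Ms) =
        - (\sum_(K : p.-tuple M)
             (P p K N * (head m1 K == m1)%:R) *: Yop br E F a (behead K) Ms)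
        - Xop br E F a m1 Ms N) &
      (forall m q r : M,
        Yop br E F a [:: m] [:: q; r] =
        - Xop br E F a q [:: r] [:: m] - Xop br E F a r [:: q] [:: m])].
Proof.
case: HU => Hlie [He0 Hf0 Hef Hh] _ _ _.
case: Hform => [[Hfl Hfr] Hinv Hsym _ _].
have {HF} HF m : Ugr br e f h 1 (F m) by case: HF.
have ap_neq0 : a p != 0 by apply: Ha0; rewrite Hp leqnn.
have := Hpair p; rewrite Hp leqnn => /(_ isT) pairing_p.
split=> [m N Q | | m q r].
- exact: (Xop_tuple_expansion Hlie He0 Hf0 Hef Hh Hfr Hinv Hsym HE HF HEF Ha1
           (ltnW Hp) ap_neq0 pairing_p).
- case: p Hp Ha0 Hpair ap_neq0 pairing_p => [//|k] k_gt0 Ha0 Hpair ak1_neq0 pairing_k1.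
  have dual_k : nestE_dual_expansion br form E F a k.
    have [k_gt1 | k_le1] := ltnP 1 k.
      by apply: (nestE_dual_expansion_proj (Pk := P k));
        [apply: Ha0 | apply: HPE | apply: Hpair]; rewrite ?k_gt1 ?leqnSn.
    have -> : k = 1%N by apply/eqP; rewrite eqn_leq k_le1; exact: k_gt0.
    exact: (nestE_dual_expansion1 Hfr HE HEF Ha1).
  exact: (Yop_recursion Hlie He0 Hf0 Hef Hh Hfl Hfr Hinv Hsym HE HF HEF k_gt0
            dual_k ak1_neq0 pairing_k1).
- exact: (Yop_two Hlie He0 Hf0 Hef Hh HE HF Ha1).
Qed.
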